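(* Let $K$ and $L$ be positive integers. Consider the $K$-user single-input single-output (SISO) broadcast channel with symbol extension factor $L$ and no channel state information at the transmitter (CSIT), as described in the context. Then the maximum achievable SpAC is $\frac{L-K+1}{L}$; equivalently, the largest achievable number of streams per user is $d = L-K+1$.
   Context: Model: one transmitter and $K$ receivers, each with a single antenna. Over $L$ channel uses (symbol extension factor $L$), receiver $i\in\{1,\dots,K\}$ observes $\mathbf{y}_i = \mathbf{H}_{i,i}\sum_{j=1}^K \mathbf{Q}_j\mathbf{x}_j + \mathbf{n}_i \in \mathbb{C}^{L}$, where $\mathbf{H}_{i,i}\in\mathbb{C}^{L\times L}$ is diagonal with the channel coefficients on the diagonal, $\mathbf{x}_j\in\mathbb{C}^{d}$ is the finite-alphabet symbol vector intended for receiver $j$, $\mathbf{Q}_j\in\mathbb{C}^{L\times d}$ is the precoder for $\mathbf{x}_j$ (of rank $d$), and $\mathbf{n}_i$ is Gaussian noise. No CSIT means the precoders $\mathbf{Q}_1,\dots,\mathbf{Q}_K$ are fixed and may not depend on the channel coefficients. For receiver $i$, the desired-signal subspace is $\mathcal{S}_i=\mathrm{span}(\mathbf{H}_{i,i}\mathbf{Q}_i)$ and the interference subspace is $\mathcal{I}_i=\sum_{j\neq i}\mathrm{span}(\mathbf{H}_{i,i}\mathbf{Q}_j)$ (sum of column spaces). A value $d$ is achievable if there exist such channel-independent precoders such that, for almost every realization of the channel coefficients, for every receiver $i$: (a) $\sum_{j=1}^K \mathrm{span}(\mathbf{H}_{i,i}\mathbf{Q}_j)=\mathbb{C}^{L}$,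 and (b) $\mathcal{S}_i\not\subseteq\mathcal{I}_i$. SpAC (symbols per transmit antenna per channel use) of such a scheme is $d/L$; the maximum achievable SpAC is the maximum of $d/L$ over achievable $d$. *)

From HB Require Import structures.
From mathcomp Require Import all_boot all_order all_algebra.
From mathcomp Require Import reals.
From mathcomp.real_closed Require Import complex.
Set Implicit Arguments.
Unset Strict Implicit.
Unset Printing Implicit Defensive.
Import Order.TTheory GRing.Theory Num.Theory.
Local Open Scope ring_scope.

Definition in_box (R : realType) (X : finType) (a b : X -> R) (v : X -> R) : Prop :=
  forall x, a x <= v x <= b x.

Definition box_vol (R : realType) (X : finType) (a b : X -> R) : R :=
  \prod_(x : X) (b x - a x).

Definition lebesgue_null (R : realType) (X : finType) (A : (X -> R) -> Prop) : Prop :=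
  forall eps : R, 0 < eps ->
    exists (a b : nat -> X -> R),
      (forall k x, a k x <= b k x) /\
      (forall v, A v -> exists k, in_box (a k) (b k) v) /\
      (forall N, \sum_(k < N) box_vol (a k) (b k) <= eps).

(* Complex coordinates identified with real coordinates (Re, Im):
   C^Y is identified with R^(Y * bool). *)
Definition realify (R : realType) (Y : finType) (v : Y * bool -> R) : Y -> R[i] :=
  fun y => (v (y, false) +i* v (y, true))%C.

Definition ae_C (R : realType) (Y : finType) (P : (Y -> R[i]) -> Prop) : Prop :=
  lebesgue_null (fun v : Y * bool -> R => ~ P (realify v)).

(* Channel realization: h (i, l) is the l-th diagonal coefficient of H_{i,i}. *)
Definition Hmat (R : realType) (K L : nat) (h : 'I_K * 'I_L -> R[i]) (i : 'I_K)
  : 'M[R[i]]_L := diag_mx (\row_(l < L) h (i, l)).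

(* Column spaces are represented as row spaces of transposes (%MS). *)
Definition cond_a (R : realType) (K L d : nat) (Q : 'I_K -> 'M[R[i]]_(L, d))
  (h : 'I_K * 'I_L -> R[i]) (i : 'I_K) : bool :=
  row_full (\sum_(j < K) <<(Hmat h i *m Q j)^T>>)%MS.

Definition cond_b (R : realType) (K L d : nat) (Q : 'I_K -> 'M[R[i]]_(L, d))
  (h : 'I_K * 'I_L -> R[i]) (i : 'I_K) : bool :=
  ~~ ((Hmat h i *m Q i)^T <= \sum_(j < K | j != i) <<(Hmat h i *m Q j)^T>>)%MS.

Definition achievable (R : realType) (K L d : nat) : Prop :=
  exists Q : 'I_K -> 'M[R[i]]_(L, d),
    (forall j, \rank (Q j) = d) /\
    ae_C (fun h : 'I_K * 'I_L -> R[i] => forall i, cond_a Q h i && cond_b Q h i).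

From HB Require Import structures.
From mathcomp Require Import all_boot all_order all_algebra.
From mathcomp Require Import reals.
From mathcomp.real_closed Require Import complex.
From mathcomp Require Import all_classical all_reals all_analysis measurable_realfun.
From mathcomp Require Import ring lra zify.
Set Implicit Arguments.
Unset Strict Implicit.
Unset Printing Implicit Defensive.
Import Order.TTheory GRing.Theory Num.Theory.
Local Open Scope ring_scope.

(* Converse: an almost-everywhere property holds at some channel realization,
   because a Lebesgue-null set is never the whole space (boxes of total volume
   below 1 cannot cover R^n: by induction on n, integrating the weighted
   indicators of the first sides over [0, 1] yields a first coordinate that is
   covered lightly).  At such a realization, condition (b) forces each of the K
   precoder column spaces, of dimension d, to lie outside the sum of the
   others; adding them one at a time raises the dimension every time, so
   d + K - 1 <= L.

   Achievability: user j sends one stream on the private slot j and its other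
   L - K streams on the slots K .. L - 1 shared by all users.  Off a finite
   union of coordinate hyperplanes all channel coefficients are nonzero; then
   slot i separates the desired signal from the interference at receiver i,
   and the precoders together reach every slot. *)

Lemma sum_interleave (V : nmodType) (F G : nat -> V) N :
  \sum_(k < N.*2) (if odd k then G k./2 else F k./2) =
  \sum_(k < N) F k + \sum_(k < N) G k.
Proof.
elim: N => [|N IH]; first by rewrite !big_ord0 addr0.
rewrite doubleS !big_ord_recr /= IH odd_double /= uphalf_double half_double.
by rewrite -!addrA; congr (_ + _); rewrite addrCA.
Qed.

Section LebesgueNull.
Variables (R : realType) (X : finType).
Implicit Types (A B : (X -> R) -> Prop) (a b : X -> R).

Lemma box_vol_ge0 a b : (forall x, a x <= b x) -> 0 <= box_vol a b.
Proof. by move=> ab; apply: prodr_ge0 => x _; rewrite subr_ge0. Qed.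

Lemma lebesgue_nullS A B :
  (forall v, A v -> B v) -> lebesgue_null B -> lebesgue_null A.
Proof.
move=> AB nB eps e0; have [a [b [ab [cov hs]]]] := nB eps e0.
by exists a, b; split => //; split => // v /AB /cov.
Qed.

Lemma lebesgue_nullU A B :
  lebesgue_null A -> lebesgue_null B -> lebesgue_null (fun v => A v \/ B v).
Proof.
move=> nA nB eps e0; have e2 : 0 < eps / 2 by lra.
have [a1 [b1 [ab1 [c1 s1]]]] := nA _ e2.
have [a2 [b2 [ab2 [c2 s2]]]] := nB _ e2.
pose a k := if odd k then a2 k./2 else a1 k./2.
pose b k := if odd k then b2 k./2 else b1 k./2.
have ab k x : a k x <= b k x by rewrite /a /b; case: ifP.
exists a, b; split=> //; split.
  move=> v [/c1 [k hk]|/c2 [k hk]].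
    by exists k.*2; rewrite /a /b odd_double half_double.
  by exists k.*2.+1; rewrite /a /b /= odd_double uphalf_double.
move=> N; have vol_ge0 k : 0 <= box_vol (a k) (b k) by exact: box_vol_ge0.
apply: (@le_trans _ _ (\sum_(k < N.*2) box_vol (a k) (b k))).
  have mono := @nondecreasing_series R (fun k => box_vol (a k) (b k)) xpredT 0.
  have := mono (fun k _ _ => vol_ge0 k) N (N + N)%N (leq_addr N N).
  by rewrite addnn !big_mkord.
have -> : \sum_(k < N.*2) box_vol (a k) (b k) = \sum_(k < N.*2)
    (if odd k then box_vol (a2 k./2) (b2 k./2) else box_vol (a1 k./2) (b1 k./2)).
  by apply: eq_bigr => k _; rewrite /a /b; case: ifP.
rewrite (sum_interleave (fun k => box_vol (a1 k) (b1 k))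
                       (fun k => box_vol (a2 k) (b2 k))).
by have := s1 N; have := s2 N; lra.
Qed.

Lemma lebesgue_null_exists (Y : finType) (y0 : Y) (P : Y -> (X -> R) -> Prop) :
  (forall y, lebesgue_null (P y)) -> lebesgue_null (fun v => exists y, P y v).
Proof.
move=> nP.
have nP_seq (s : seq Y) :
    lebesgue_null (fun v => P y0 v \/ exists2 y, y \in s & P y v).
  elim: s => [|y s IH]; first by apply: lebesgue_nullS (nP y0) => v [//|[]].
  apply: lebesgue_nullS (lebesgue_nullU (nP y) IH).
  move=> v [|[z]]; [by right; left | rewrite in_cons => /predU1P[-> | zs] Pz].
    by left.
  by right; right; exists z.
apply: lebesgue_nullS (nP_seq (enum Y)) => v [y Py].
by right; exists y; rewrite ?mem_enum.
Qed.

Lemma lebesgue_null_coord_eq0 (x0 : X) : lebesgue_null (fun v : X -> R => v x0 = 0).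
Proof.
move=> eps e0.
pose P (k : nat) : R := \prod_(x | x != x0) (2 * k%:R + 1).
have P_gt0 k : 0 < P k by apply: prodr_gt0 => x _; rewrite ltr_wpDl ?mulr_ge0.
pose del (k : nat) : R := eps / (2 ^+ k.+2 * P k).
have del_gt0 k : 0 < del k by rewrite divr_gt0 // mulr_gt0 // exprn_gt0.
pose a k x := if x == x0 then - del k else - k%:R.
pose b k x := if x == x0 then del k else k%:R.
have ab k x : a k x <= b k x.
  by rewrite /a /b; have := del_gt0 k; have := ler0n R k; case: ifP => _; lra.
exists a, b; split=> //; split.
  move=> v v0; pose s := \sum_x `|v x|.
  have s_ge0 : 0 <= s by apply: sumr_ge0.
  exists (Num.Def.archi_bound s) => x; rewrite /a /b.
  have := archi_boundP s_ge0; set k := Num.Def.archi_bound s => sk.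
  case: eqP => [->|_]; first by rewrite v0; have := del_gt0 k; lra.
  have : `|v x| <= s by rewrite /s (bigD1 x) //= lerDl sumr_ge0.
  by rewrite -ler_norml; lra.
have vol k : box_vol (a k) (b k) <= (eps / 2) * (1 / 2) ^+ k.
  have -> : eps / 2 * (1 / 2) ^+ k = (del k - - del k) * P k.
    by rewrite /del div1r exprVn !exprS; field; rewrite gt_eqF ?expf_neq0.
  rewrite /box_vol (bigD1 x0) //= /a /b eqxx.
  apply: ler_wpM2l; first by have := del_gt0 k; lra.
  apply: ler_prod => x /negbTE ->; have := ler0n R k => k_ge0.
  by apply/andP; split; lra.
move=> N; apply: (le_trans (ler_sum _ (fun (k : 'I_N) _ => vol k))).
have := @geometric_le_lim R N (eps / 2) (1 / 2); rewrite /series /geometric /=.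
rewrite big_mkord => /(_ _ _ _)/le_trans; apply; rewrite ?ger0_norm; try lra.
by rewrite (_ : eps / 2 / (1 - 1 / 2) = eps) //; field.
Qed.

End LebesgueNull.

Section PointOfLowCoverage.
Local Open Scope classical_set_scope.
Variables (R : realType) (w al be : nat -> R) (eps : R).
Hypotheses (w_ge0 : forall k, 0 <= w k) (al_le_be : forall k, al k <= be k).
Hypothesis weighted_length : forall N, \sum_(k < N) w k * (be k - al k) <= eps.

Let I k : set R := `[al k, be k].
Let g k t : \bar R := (w k * \1_(I k) t)%:E.

Let gE k t : g k t = (if (al k <= t) && (t <= be k) then w k else 0)%:E.
Proof.
rewrite /g /I indicE; congr (_%:E).
have -> : (t \in `[al k, be k]) = (al k <= t <= be k).
  by apply/idP/idP; rewrite in_setE /= in_itv.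
by case: ifP; rewrite ?mulr1 ?mulr0.
Qed.

Let g_ge0 k t : (0 <= g k t)%E.
Proof. by rewrite gE lee_fin; case: ifP. Qed.

Let mg k : measurable_fun [set: R] (g k).
Proof.
apply/measurable_EFinP; apply: measurable_funM => //.
by apply: measurable_indic; exact: measurable_itv.
Qed.

Let integral_weighted_indicators (D : set R) : measurable D ->
  (\int[lebesgue_measure]_(t in D) \sum_(k <oo) g k t <= eps%:E)%E.
Proof.
move=> mD; rewrite integral_nneseries //; last first.
  by move=> k; exact: measurable_funTS (mg k).
apply: lime_le.
  by apply: is_cvg_ereal_nneg_natsum => k _; apply: integral_ge0 => t _; exact: g_ge0.
apply: nearW => N; rewrite big_mkord.
apply: le_trans (_ : \sum_(k < N) (w k * (be k - al k))%:E <= _)%E; last first.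
  by rewrite sumEFin lee_fin.
apply: lee_sum => k _; rewrite /g; under eq_integral => t _ do rewrite EFinM.
have mI : measurable (I k) by exact: measurable_itv.
rewrite ge0_integralZl_EFin //; last first.
  by apply/measurable_EFinP; exact: measurable_indic.
rewrite integral_indic // EFinM lee_wpmul2l ?lee_fin //.
apply: (@le_trans _ _ (lebesgue_measure (I k))).
  by apply: le_measure; rewrite ?inE //; apply: measurableI.
rewrite /I lebesgue_measure_itv /= lte_fin; case: ltP => // _.
by rewrite lee_fin subr_ge0 al_le_be.
Qed.

(* Integrating over [0, 1]: if every point had weight above [c], the
   integral would exceed [c > eps]. *)
Lemma exists_point_of_low_covering_weight (c : R) : eps < c ->
  exists t, forall N,
    \sum_(k < N) (if (al k <= t) && (t <= be k) then w k else 0) <= c.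
Proof.
move=> eps_lt_c; apply/not_existsP => heavy.
have eps_ge0 : 0 <= eps by have := weighted_length 0; rewrite big_ord0.
pose D : set R := `[0%R, 1%R].
have mD : measurable D by exact: measurable_itv.
have : (\int[lebesgue_measure]_(t in D) (cst c%:E) t <=
        \int[lebesgue_measure]_(t in D) \sum_(k <oo) g k t)%E.
  apply: ge0_le_integral => //.
  - by move=> t _; rewrite lee_fin; lra.
  - by apply: ge0_emeasurable_sum => k *; [exact: g_ge0 | exact: measurable_funTS (mg k)].
  - move=> t _; have /existsNP[N /negP] := heavy t; rewrite -ltNge => cN.
    apply: le_trans (nneseries_lim_ge N (fun k _ _ => g_ge0 k t)).
    by rewrite (eq_bigr _ (fun k _ => gE k t)) sumEFin lee_fin big_mkord ltW.
have D1 : lebesgue_measure D = 1%E.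
  by rewrite /D lebesgue_measure_itv /= lte_fin ltr01 oppr0 adde0.
rewrite integral_cst // (_ : _ D = 1%E) // mule1.
move=> /le_trans/(_ (integral_weighted_indicators mD)); rewrite lee_fin; lra.
Qed.

End PointOfLowCoverage.

(* Fubini-style induction on the dimension: fix a first coordinate [t] that is
   covered lightly by the projections of the boxes, then recurse on the boxes
   whose first side contains [t]. *)
Lemma box_cover_misses_point (R : realType) (n : nat) (eps : R) :
  eps < 1 -> forall (sel : pred nat) (a b : nat -> 'I_n -> R),
  (forall k i, a k i <= b k i) ->
  (forall N, \sum_(k < N | sel k) box_vol (a k) (b k) <= eps) ->
  exists v, forall k, sel k -> ~ in_box (a k) (b k) v.
Proof.
elim: n eps => [|n IH] eps eps_lt1 sel a b ab vol.
  (* in dimension 0 every box has volume 1, so none can be selected *)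
  exists (fun=> 0) => k sk _; have := vol k.+1.
  rewrite big_mkcond big_ord_recr /= sk /box_vol big_ord0.
  have : 0 <= \sum_(i < k) (if sel i then \prod_(x < 0) (b i x - a i x) else 0).
    by apply: sumr_ge0 => i _; case: ifP; rewrite ?big_ord0.
  lra.
pose a' k (i : 'I_n) := a k (lift ord0 i).
pose b' k (i : 'I_n) := b k (lift ord0 i).
pose w k := if sel k then box_vol (a' k) (b' k) else 0.
have w_ge0 k : 0 <= w k.
  by rewrite /w; case: ifP => // _; apply: box_vol_ge0 => i; exact: ab.
pose c := (eps + 1) / 2.
have [t light] : exists t, forall N,
    \sum_(k < N) (if (a k ord0 <= t) && (t <= b k ord0) then w k else 0) <= c.
  apply: (exists_point_of_low_covering_weight w_ge0 (fun k => ab k ord0)).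
    move=> N; rewrite (eq_bigr (fun k : 'I_N =>
      if sel k then box_vol (a k) (b k) else 0)).
      by rewrite -big_mkcond; exact: vol.
    move=> k _; rewrite /w /box_vol big_ord_recl.
    by case: ifP => _; rewrite ?mul0r // mulrC.
  by rewrite /c; lra.
pose sel' k := sel k && (a k ord0 <= t) && (t <= b k ord0).
have [v' miss'] : exists v', forall k, sel' k -> ~ in_box (a' k) (b' k) v'.
  apply: (IH c _ sel' a' b' (fun k i => ab k _)); first by rewrite /c; lra.
  move=> N; rewrite big_mkcond (eq_bigr (fun k : 'I_N =>
    if (a k ord0 <= t) && (t <= b k ord0) then w k else 0)) ?light // => k _.
  by rewrite /sel' /w -andbA; case: (sel k); case: ifP.
exists (fun i => if unlift ord0 i is Some j then v' j else t) => k sk inb.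
have := inb ord0; rewrite unlift_none => t_in.
apply: (miss' k); first by rewrite /sel' sk -andbA t_in.
by move=> j; have := inb (lift ord0 j); rewrite liftK.
Qed.

Lemma lebesgue_null_exists_not (R : realType) (X : finType)
    (A : (X -> R) -> Prop) :
  lebesgue_null A -> exists v, ~ A v.
Proof.
move=> /(_ (1 / 2)) [|a [b [ab [cov vol]]]]; first by lra.
pose a' k (i : 'I_#|X|) := a k (enum_val i).
pose b' k (i : 'I_#|X|) := b k (enum_val i).
have vol' N : \sum_(k < N | xpredT k) box_vol (a' k) (b' k) <= 1 / 2.
  rewrite (eq_bigr (fun k : 'I_N => box_vol (a k) (b k))) ?vol // => k _.
  rewrite /box_vol [RHS](reindex (fun i : 'I_#|X| => enum_val i)) //.
  by exists enum_rank => x _; [exact: enum_valK | exact: enum_rankK].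
have [|v' miss] := @box_cover_misses_point R _ (1 / 2) _ xpredT a' b'
    (fun k i => ab k _) vol'; first lra.
exists (fun x => v' (enum_rank x)) => /cov [k inb].
by apply: (miss k isT) => i; have := inb (enum_val i); rewrite enum_valK.
Qed.

(* Adding the subspaces one at a time, each one strictly enlarges the sum:
   the ranks climb from [d] by at least one per step. *)
Lemma rank_irredundant_sum (F : fieldType) (K d n : nat)
    (M : 'I_K -> 'M[F]_(d, n)) :
  (0 < K)%N -> (forall j, \rank (M j) = d) ->
  (forall i, ~~ (M i <= \sum_(j < K | j != i) << M j >>)%MS) ->
  (d + K <= n + 1)%N.
Proof.
move=> K_gt0 rankM irred.
pose T m := (\sum_(j < K | (j < m)%N) << M j >>)%MS.
have M_sub_T m (j : 'I_K) : (j < m)%N -> (M j <= T m)%MS.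
  by move=> jm; apply: (sumsmx_sup j) => //; rewrite genmxE.
have rank_T m : (m < K)%N -> (d + m <= \rank (T m.+1))%N.
  elim: m => [|m IH] mK.
    by rewrite addn0 -(rankM (Ordinal mK)); apply/mxrankS/M_sub_T.
  pose jm := Ordinal mK.
  have TS : (T m.+1 <= T m.+2)%MS.
    by apply/sumsmx_subP => j jm1; apply: (sumsmx_sup j); rewrite // ltnS ltnW.
  have T_proper : ~~ (T m.+2 <= T m.+1)%MS.
    apply/negP => T_sub; apply: (negP (irred jm)).
    apply: (submx_trans (M_sub_T m.+2 jm (ltnSn _))); apply: (submx_trans T_sub).
    apply/sumsmx_subP => j jm1; apply: (sumsmx_sup j) => //.
    by apply: contraTneq jm1 => ->; rewrite ltnn.
  have [le_rank eq_rank] := mxrank_leqif_sup TS.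
  have : (\rank (T m.+1) < \rank (T m.+2))%N.
    by rewrite ltn_neqAle le_rank eq_rank T_proper.
  have := IH (ltnW mK); lia.
have := rank_T K.-1; rewrite prednK // => /(_ (leqnn K)).
have := rank_leq_col (T K); lia.
Qed.

Lemma achievable_le (R : realType) (K L d : nat) :
  (0 < K)%N -> achievable R K L d -> (d + K <= L + 1)%N.
Proof.
move=> K_gt0 [Q [rankQ /lebesgue_null_exists_not [v /contrapT good]]].
apply: (@rank_irredundant_sum _ _ _ _ (fun j => (Q j)^T)) => // [j|i].
  by rewrite mxrank_tr.
have /andP[_] := good i; apply: contra => Qi_sub.
rewrite trmx_mul tr_diag_mx; apply: (submx_trans (submxMr _ Qi_sub)).
rewrite sumsmxMr; apply: sumsmxS => j _.
by rewrite genmxE /Hmat trmx_mul tr_diag_mx submxMr ?genmxE.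
Qed.

(* Stream [0] of user [j] occupies slot [j], which no other user touches;
   streams [1 .. L - K] of every user share the slots [K .. L - 1]. *)
Definition precoder_slot (K j c : nat) : nat := if c == 0%N then j else (K + c.-1)%N.

Definition precoder (F : nzRingType) (K L : nat) (j : 'I_K) : 'M[F]_(L, L - K + 1) :=
  \matrix_(l, c) (l == precoder_slot K j c :> nat)%:R.

Lemma precoder_slot_lt K L j c :
  (K <= L)%N -> (j < K)%N -> (c < L - K + 1)%N -> (precoder_slot K j c < L)%N.
Proof. by rewrite /precoder_slot; case: eqP; lia. Qed.

Lemma precoder_slot_inj K j c c' : (j < K)%N ->
  (precoder_slot K j c == precoder_slot K j c') = (c == c').
Proof.
by rewrite /precoder_slot => jK; case: (c =P 0%N); case: (c' =P 0%N);
  move=> *; apply/eqP/eqP; lia.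
Qed.

Lemma mxrank_precoder (F : fieldType) K L (j : 'I_K) :
  (K <= L)%N -> \rank (precoder F L j) = (L - K + 1)%N.
Proof.
move=> KL; have QtQ : (precoder F L j)^T *m precoder F L j = 1%:M.
  apply/matrixP => c c'; rewrite !mxE.
  rewrite (bigD1 (Ordinal (precoder_slot_lt KL (ltn_ord j) (ltn_ord c)))) //=.
  rewrite big1 => [|l /negbTE l_neq]; last first.
    by rewrite !mxE (_ : (l == _ :> nat) = false) ?mul0r // -l_neq.
  rewrite !mxE /= eqxx precoder_slot_inj // mul1r addr0.
  by congr (_%:R); apply/eqP/eqP => [/val_inj | ->].
apply/eqP; rewrite eqn_leq rank_leq_col /=.
by rewrite -{1}(mxrank1 F (L - K + 1)) -QtQ mxrankM_maxr.
Qed.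

Section PrecoderConditions.
Variables (R : realType) (K L : nat) (h : 'I_K * 'I_L -> R[i]).
Hypotheses (KL : (K <= L)%N) (h_neq0 : forall x, h x != 0).

Let HQ_entry (i j : 'I_K) l c :
  (Hmat h i *m precoder R[i] L j) l c = h (i, l) * (l == precoder_slot K j c :> nat)%:R.
Proof. by rewrite mul_diag_mx !mxE. Qed.

(* Slot [i] is seen by user [i] alone, so the column functional picking it
   kills the interference subspace but not the desired one. *)
Lemma cond_b_precoder (i : 'I_K) : cond_b (precoder R[i] L) h i.
Proof.
pose slot_i : 'I_L := Ordinal (leq_trans (ltn_ord i) KL).
pose e : 'cV[R[i]]_L := delta_mx slot_i 0.
have interference0 j : j != i -> (Hmat h i *m precoder R[i] L j)^T *m e = 0.
  move=> ji; apply/matrixP => c z; rewrite -colE [LHS]mxE [LHS]mxE HQ_entry mxE.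
  rewrite (_ : (_ == _ :> nat) = false) ?mulr0 // /precoder_slot /=.
  case: (val c =P 0%N) => _; last by have := ltn_ord i; lia.
  by apply: contraNF ji => /eqP ij; apply/eqP/val_inj.
have c0 : (0 < L - K + 1)%N by rewrite addn1.
have desired_neq0 : (Hmat h i *m precoder R[i] L i)^T *m e != 0.
  apply: contraNneq (h_neq0 (i, slot_i)) => /matrixP /(_ (Ordinal c0) 0).
  by rewrite -colE [LHS]mxE [LHS]mxE HQ_entry mxE /precoder_slot /= eqxx mulr1 => ->.
rewrite /cond_b; apply/negP => sub_interference.
suff : ((Hmat h i *m precoder R[i] L i)^T <= kermx e)%MS.
  by rewrite sub_kermx (negbTE desired_neq0).
apply: (submx_trans sub_interference); apply/sumsmx_subP => j ji.
by rewrite genmxE sub_kermx interference0.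
Qed.

Lemma cond_a_precoder (i : 'I_K) : cond_a (precoder R[i] L) h i.
Proof.
rewrite /cond_a -sub1mx; apply/row_subP => l; rewrite row1.
have [j [c slot_l]] : exists (j : 'I_K) (c : 'I_(L - K + 1)), precoder_slot K j c = l.
  have [lK|Kl] := ltnP l K.
    by exists (Ordinal lK), (Ordinal (ltn_addl (L - K) (ltnSn 0))).
  have c_lt : (l - K + 1 < L - K + 1)%N by have := ltn_ord l; lia.
  by exists i, (Ordinal c_lt); rewrite /precoder_slot /=; case: eqP; lia.
apply: (sumsmx_sup j) => //; rewrite genmxE.
suff -> : delta_mx 0 l = ((h (i, l))^-1 *: delta_mx 0 c : 'rV_(L - K + 1)) *m
    (Hmat h i *m precoder R[i] L j)^T by exact: submxMl.
apply/matrixP => z l'; rewrite [RHS]mxE (bigD1 c) //= big1 => [|c' c'_neq]; last first.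
  by rewrite !mxE (negbTE c'_neq) andbF mulr0 mul0r.
rewrite addr0 [X in _ * X]mxE HQ_entry !mxE slot_l (ord1 z) !eqxx /=.
have [->|lp_neq] := eqVneq l' l; first by rewrite eqxx !mulr1 mulVf.
by rewrite (_ : (l' == l :> nat) = false) ?mulr0 //; apply/negbTE.
Qed.

End PrecoderConditions.

Lemma achievable_max (R : realType) (K L : nat) :
  (0 < K)%N -> (0 < L)%N -> (K <= L)%N -> achievable R K L (L - K + 1).
Proof.
move=> K_gt0 L_gt0 KL; exists (precoder R[i] L); split=> [j|].
  exact: mxrank_precoder.
pose x0 : 'I_K * 'I_L := (Ordinal K_gt0, Ordinal L_gt0).
have re0_null := @lebesgue_null_exists R _ _ x0 (fun x v => v (x, false) = 0)
  (fun x => lebesgue_null_coord_eq0 (x, false)).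
apply: lebesgue_nullS re0_null => v bad; apply/not_existsP => re_neq0.
apply: bad => i; have h_neq0 x : realify v x != 0.
  by apply/eqP => -[re0 _]; exact: re_neq0 x re0.
by rewrite cond_a_precoder ?cond_b_precoder.
Qed.

Theorem theorem1 (R : realType) (K L : nat) (HK : (0 < K)%N) (HL : (0 < L)%N) :
  (forall d : nat, achievable R K L d -> (d + K <= L + 1)%N) /\
  ((K <= L)%N -> achievable R K L (L - K + 1)).
Proof.
split=> [d|KL]; first exact: achievable_le.
exact: achievable_max.
Qed.
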